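(* Let $M$ be a $(B,A)$-bimodule such that $M_A$ is finitely generated projective, and let $S=\mathrm{End}_A(M)$. Then: (1) If $M$ is a separable bimodule, then the comatrix coring $M^*\otimes_BM$ is a coseparable $A$-coring. (2) If the comatrix coring $M^*\otimes_BM$ is a coseparable $A$-coring, then the Sweedler coring $S\otimes_BS$ is a coseparable $S$-coring.
   Context: All rings are associative with $1$. For a $(B,A)$-bimodule $M$ with $M_A$ finitely generated projective, $M^*=\mathrm{Hom}_A(M,A)$ is an $(A,B)$-bimodule, and with a finite dual basis $\{e_i,e_i^*\}_{i\in I}$ the comatrix $A$-coring is $M^*\otimes_BM$ with coproduct $\varphi\otimes m\mapsto\sum_i\varphi\otimes e_i\otimes e_i^*\otimes m$ and counit $\varphi\otimes m\mapsto\varphi(m)$. $S=\mathrm{End}_A(M)$ with composition, and $B\to S$, $b\mapsto(m\mapsto bm)$. The Sweedler $S$-coring $S\otimes_BS$ has coproduct $s\otimes s'\mapsto s\otimes1_S\otimes s'$ and counit $s\otimes s'\mapsto ss'$. Let ${}^*M=\mathrm{Hom}_B(M,B)$ (left $B$-module maps), an $(A,B)$-bimodule via $(a\varphi)(m)=\varphi(ma)$, $(\varphi b)(m)=\varphi(m)b$; $M$ is a separable bimodule ($B$ is $M$-separable over $A$) if the evaluation map $M\otimes_A{}^*M\to B$, $m\otimes\varphi\mapsto\varphi(m)$, is a split epimorphism of $(B,B)$-bimodules. For an $A$-coring $\mathcal{C}$ with coproduct $\Delta(c)=\sum c_{(1)}\otimes c_{(2)}$ and counit $\varepsilon$, a cointegral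 is an $(A,A)$-bimodule map $\gamma:\mathcal{C}\otimes_A\mathcal{C}\to A$ with $\sum c_{(1)}\gamma(c_{(2)}\otimes c')=\sum\gamma(c\otimes c'_{(1)})c'_{(2)}$ for all $c,c'$ and $\gamma\circ\Delta=\varepsilon$; $\mathcal{C}$ is coseparable if it admits a cointegral (equivalently, $\Delta$ is a split monomorphism of $\mathcal{C}$-bicomodules). *)

(* Tensor products over (noncommutative) rings are not in the
   library, so they are built here as formal sums (lists of pairs) modulo the
   congruence generated by the defining relations of the tensor product. *)
From mathcomp Require Import all_boot all_algebra.
Set Implicit Arguments.
Unset Strict Implicit.
Unset Printing Implicit Defensive.
Import GRing.Theory.
Local Open Scope ring_scope.

(* X, Y are given as "setoids" (equality eqX, eqY) together
   with a predicate PX, PY carving out the module inside an ambient type.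
   Elements of X (x)_R Y are represented by formal sums s : seq (X * Y)
   (all entries satisfying PX/PY, see allP), and two formal sums denote the
   same element iff they are related by teq. *)
Section Tensor.
Variables (R X Y : Type) (eqX : X -> X -> Prop) (eqY : Y -> Y -> Prop)
  (addX : X -> X -> X) (addY : Y -> Y -> Y) (zeroX : X) (zeroY : Y)
  (ract : X -> R -> X) (lact : R -> Y -> Y) (PX : X -> Prop) (PY : Y -> Prop).

Inductive teq : seq (X * Y) -> seq (X * Y) -> Prop :=
| teq_refl s : teq s s
| teq_sym s t : teq s t -> teq t s
| teq_trans s t u : teq s t -> teq t u -> teq s u
| teq_cat s1 s2 t1 t2 : teq s1 t1 -> teq s2 t2 -> teq (s1 ++ s2) (t1 ++ t2)
| teq_comm s t : teq (s ++ t) (t ++ s)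
| teq_eqv x x' y y' : PX x -> PX x' -> PY y -> PY y' -> eqX x x' -> eqY y y' ->
    teq [:: (x, y)] [:: (x', y')]
| teq_addl x x' y : PX x -> PX x' -> PY y ->
    teq [:: (addX x x', y)] [:: (x, y); (x', y)]
| teq_addr x y y' : PX x -> PY y -> PY y' ->
    teq [:: (x, addY y y')] [:: (x, y); (x, y')]
| teq_zerol y : PY y -> teq [:: (zeroX, y)] [::]
| teq_zeror x : PX x -> teq [:: (x, zeroY)] [::]
| teq_bal x r y : PX x -> PY y -> teq [:: (ract x r, y)] [:: (x, lact r y)].

Fixpoint allP (s : seq (X * Y)) : Prop :=
  match s with
  | [::] => True
  | p :: s' => [/\ PX p.1, PY p.2 & allP s']
  end.
End Tensor.

(* R is a ring given with its (setoid) equality eqR and carving predicate PR;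
   C is an R-bimodule; Delta : C -> C (x)_R C (formal sums) and eps : C -> R.
   A cointegral is an R-bimodule map g : C (x)_R C -> R (given on formal
   sums, well defined w.r.t. teq) with
     sum c_(1) g(c_(2) (x) c') = sum g(c (x) c'_(1)) c'_(2)   and  g o Delta = eps. *)
Section Coring.
Variables (R : Type) (eqR : R -> R -> Prop) (addR : R -> R -> R)
  (mulR : R -> R -> R) (PR : R -> Prop)
  (C : Type) (eqC : C -> C -> Prop) (addC : C -> C -> C) (zeroC : C)
  (lactC : R -> C -> C) (ractC : C -> R -> C) (PC : C -> Prop)
  (Delta : C -> seq (C * C)) (eps : C -> R).

Definition CCeq := teq eqC eqC addC addC zeroC zeroC ractC lactC PC PC.
Definition CCwf := allP PC PC.
Definition sumC (s : seq C) : C := foldr addC zeroC s.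

Definition is_cointegral (g : seq (C * C) -> R) : Prop :=
  (forall u, CCwf u -> PR (g u)) /\
  (forall u v, CCwf u -> CCwf v -> CCeq u v -> eqR (g u) (g v)) /\
  (forall u v, CCwf u -> CCwf v -> eqR (g (u ++ v)) (addR (g u) (g v))) /\
  (forall r c c', PR r -> PC c -> PC c' ->
      eqR (g [:: (lactC r c, c')]) (mulR r (g [:: (c, c')]))) /\
  (forall r c c', PR r -> PC c -> PC c' ->
      eqR (g [:: (c, ractC c' r)]) (mulR (g [:: (c, c')]) r)) /\
  (forall c c', PC c -> PC c' ->
      eqC (sumC [seq ractC p.1 (g [:: (p.2, c')]) | p <- Delta c])
          (sumC [seq lactC (g [:: (c, p.1)]) p.2 | p <- Delta c'])) /\
  (forall c, PC c -> eqR (g (Delta c)) (eps c)).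

Definition coseparable : Prop := exists g, is_cointegral g.
End Coring.

Definition feq (U V : Type) (f g : U -> V) : Prop := forall x, f x = g x.

Definition additive_fun (U V : zmodType) (f : U -> V) : Prop :=
  forall x y, f (x + y) = f x + f y.

Section Concrete.
Variables (A B : pzRingType) (M : zmodType)
  (lB : B -> M -> M) (rA : M -> A -> M).

Definition is_bimodule : Prop :=
  (forall b m m', lB b (m + m') = lB b m + lB b m') /\
  (forall b b' m, lB (b + b') m = lB b m + lB b' m) /\
  (forall b b' m, lB (b * b') m = lB b (lB b' m)) /\
  (forall m, lB 1 m = m) /\
  (forall a m m', rA (m + m') a = rA m a + rA m' a) /\
  (forall a a' m, rA m (a + a') = rA m a + rA m a') /\
  (forall a a' m, rA m (a * a') = rA (rA m a) a') /\
  (forall m, rA m 1 = m) /\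
  (forall b m a, lB b (rA m a) = rA (lB b m) a).

Definition Mdual (f : M -> A) : Prop :=
  additive_fun f /\ forall m a, f (rA m a) = f m * a.
Definition Mldual (g : M -> B) : Prop :=
  additive_fun g /\ forall b m, g (lB b m) = b * g m.
Definition Mend (s : M -> M) : Prop :=
  additive_fun s /\ forall m a, s (rA m a) = rA (s m) a.

(* finite dual basis {e_i, e_i^*} of M_A (witnesses M_A f.g. projective) *)
Definition is_dual_basis (n : nat) (e : 'I_n -> M) (es : 'I_n -> M -> A) : Prop :=
  (forall i, Mdual (es i)) /\ (forall m, \sum_(i < n) rA (e i) (es i m) = m).

(* ---- separable bimodule: ev : M (x)_A *M -> B split epi of (B,B)-bimodules *)
Definition Etens := seq (M * (M -> B)).
Definition Eeq : Etens -> Etens -> Prop :=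
  teq (@eq M) (@feq M B) +%R (fun g h m => g m + h m) 0 (fun _ => 0)
      rA (fun (a : A) (g : M -> B) m => g (rA m a)) (fun _ => True) Mldual.
Definition Ewf : Etens -> Prop := allP (fun _ : M => True) Mldual.
Definition Eev (s : Etens) : B := \sum_(p <- s) p.2 p.1.
Definition Elact (b : B) (s : Etens) : Etens := [seq (lB b p.1, p.2) | p <- s].
Definition Eract (s : Etens) (b : B) : Etens :=
  [seq (p.1, fun m => p.2 m * b) | p <- s].

Definition separable_bimodule : Prop :=
  exists sigma : B -> Etens,
    (forall b, Ewf (sigma b)) /\
    (forall b b', Eeq (sigma (b + b')) (sigma b ++ sigma b')) /\
    (forall b b', Eeq (sigma (b * b')) (Elact b (sigma b'))) /\
    (forall b b', Eeq (sigma (b * b')) (Eract (sigma b) b')) /\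
    (forall b, Eev (sigma b) = b).

Definition comat := seq ((M -> A) * M).
Definition comat_eq : comat -> comat -> Prop :=
  teq (@feq M A) (@eq M) (fun f g m => f m + g m) +%R (fun _ => 0) 0
      (fun (f : M -> A) (b : B) m => f (lB b m)) lB Mdual (fun _ => True).
Definition comat_wf : comat -> Prop := allP Mdual (fun _ : M => True).
Definition comat_lact (a : A) (c : comat) : comat :=
  [seq (fun m => a * p.1 m, p.2) | p <- c].
Definition comat_ract (c : comat) (a : A) : comat :=
  [seq (p.1, rA p.2 a) | p <- c].
Definition comat_Delta n (e : 'I_n -> M) (es : 'I_n -> M -> A) (c : comat)
  : seq (comat * comat) :=
  flatten [seq [seq ([:: (p.1, e i)], [:: (es i, p.2)]) | i <- enum 'I_n] | p <- c].
Definition comat_eps (c : comat) : A := \sum_(p <- c) p.1 p.2.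

Definition comatrix_coseparable n (e : 'I_n -> M) (es : 'I_n -> M -> A) : Prop :=
  coseparable (@eq A) +%R *%R (fun _ => True) comat_eq cat [::]
    comat_lact comat_ract comat_wf (comat_Delta e es) comat_eps.

(* ---- Sweedler S-coring S (x)_B S, S = End_A(M), B -> S, b |-> lB b *)
Definition Sadd (s t : M -> M) : M -> M := fun m => s m + t m.
Definition Szero : M -> M := fun _ => 0.
Definition Smul (s t : M -> M) : M -> M := fun m => s (t m).
Definition swe := seq ((M -> M) * (M -> M)).
Definition swe_eq : swe -> swe -> Prop :=
  teq (@feq M M) (@feq M M) Sadd Sadd Szero Szero
      (fun s (b : B) m => s (lB b m)) (fun (b : B) s m => lB b (s m)) Mend Mend.
Definition swe_wf : swe -> Prop := allP Mend Mend.
Definition swe_lact (s : M -> M) (d : swe) : swe :=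
  [seq (Smul s p.1, p.2) | p <- d].
Definition swe_ract (d : swe) (s : M -> M) : swe :=
  [seq (p.1, Smul p.2 s) | p <- d].
Definition swe_Delta (d : swe) : seq (swe * swe) :=
  [seq ([:: (p.1, fun m => m)], [:: (fun m => m, p.2)]) | p <- d].
Definition swe_eps (d : swe) : M -> M := foldr Sadd Szero [seq Smul p.1 p.2 | p <- d].

Definition sweedler_coseparable : Prop :=
  coseparable (@feq M M) Sadd Smul Mend swe_eq cat [::]
    swe_lact swe_ract swe_wf swe_Delta swe_eps.
End Concrete.

From Pilot Require Import Defs.
From mathcomp Require Import all_boot all_algebra.
From Stdlib Require List.
Set Implicit Arguments.
Unset Strict Implicit.
Unset Printing Implicit Defensive.
Import GRing.Theory.
Local Open Scope ring_scope.

(* (1) A separability element [sep = sum_j m_j (x) phi_j] of [M (x)_A *M] (central, with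
   [sum_j phi_j(m_j) = 1]) yields the [B]-valued pairing [<m, f> = sum_j phi_j (m f(m_j))] on
   [M x M^*]; centrality makes it [B]-balanced, so [(phi (x) m) (x) (psi (x) m') |-> phi (<m, psi> m')]
   is well defined on the comatrix coring, and it is a cointegral: coassociativity reduces to the
   dual basis identity [sum_i e_i e_i^*(x) = x], the counit property to [sum_j phi_j(m_j) = 1].
   (2) A cointegral [gamma] of [M^* (x)_B M] induces [Gamma : S -> S],
   [Gamma(u)(x) = sum_{i,l} e_i gamma((e_i^* (x) u(e_l)) (x) (e_l^* (x) x))], which commutes with [B]
   on both sides, fixes [1] by the counit property of [gamma], and satisfies
   [s (x) Gamma(u) t = s Gamma(u) (x) t] in [S (x)_B S] by its coassociativity.  Hence
   [(s (x) s') (x) (t (x) t') |-> s Gamma(s' t) t'] is a cointegral of the Sweedler coring. *)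

Arguments teq_refl {R X Y eqX eqY addX addY zeroX zeroY ract lact PX PY} s.
Arguments teq_sym {R X Y eqX eqY addX addY zeroX zeroY ract lact PX PY s t} _.
Arguments teq_trans {R X Y eqX eqY addX addY zeroX zeroY ract lact PX PY s t u} _ _.
Arguments teq_cat {R X Y eqX eqY addX addY zeroX zeroY ract lact PX PY s1 s2 t1 t2} _ _.
Arguments teq_comm {R X Y eqX eqY addX addY zeroX zeroY ract lact PX PY} s t.
Arguments teq_eqv {R X Y eqX eqY addX addY zeroX zeroY ract lact PX PY x x' y y'} _ _ _ _ _ _.
Arguments teq_addl {R X Y eqX eqY addX addY zeroX zeroY ract lact PX PY x x' y} _ _ _.
Arguments teq_addr {R X Y eqX eqY addX addY zeroX zeroY ract lact PX PY x y y'} _ _ _.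
Arguments teq_zerol {R X Y eqX eqY addX addY zeroX zeroY ract lact PX PY y} _.
Arguments teq_zeror {R X Y eqX eqY addX addY zeroX zeroY ract lact PX PY x} _.
Arguments teq_bal {R X Y eqX eqY addX addY zeroX zeroY ract lact PX PY x} r {y} _ _.

Lemma Forall_all (T : Type) (P : T -> Prop) (l : seq T) : (forall x, P x) -> List.Forall P l.
Proof. by move=> HP; apply/List.Forall_forall. Qed.

Lemma allP_Forall (X Y : Type) (PX : X -> Prop) (PY : Y -> Prop) s :
  Defs.allP PX PY s <-> List.Forall (fun p => PX p.1 /\ PY p.2) s.
Proof.
elim: s => [|p s IHs] /=; first by split.
rewrite List.Forall_cons_iff -IHs.
by split=> [[? ? ?]|[[? ?] ?]].
Qed.

Lemma allP_cat (X Y : Type) (PX : X -> Prop) (PY : Y -> Prop) s t :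
  Defs.allP PX PY s -> Defs.allP PX PY t -> Defs.allP PX PY (s ++ t).
Proof. by elim: s => //= p s IHs [? ? Hs] Ht; split=> //; apply: IHs. Qed.

Lemma flatten_map_flatten (I J K : Type) (g : J -> seq K) (h : I -> seq J) l :
  flatten (map g (flatten (map h l))) = flatten [seq flatten (map g (h i)) | i <- l].
Proof. by elim: l => //= i l IHl; rewrite map_cat flatten_cat IHl. Qed.

Lemma flatten_map_seq1 (I J K : Type) (g : J -> seq K) (h : I -> J) (k : I -> K) l :
  (forall i, g (h i) = [:: k i]) -> flatten (map g (map h l)) = map k l.
Proof. by move=> ghk; elim: l => //= i l ->; rewrite ghk. Qed.

Lemma sumC_cat (T : Type) (s : seq (seq T)) : sumC cat [::] s = flatten s.
Proof. by []. Qed.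

Lemma foldr_closed (Z : Type) (P : Z -> Prop) (op : Z -> Z -> Z) z0 (l : seq Z) :
  (forall z z', P z -> P z' -> P (op z z')) -> P z0 -> List.Forall P l -> P (foldr op z0 l).
Proof. by move=> opP z0P; elim=> //= z l' Pz _ IHl; apply: opP. Qed.

Section FormalTensor.
Context {R X Y : Type} {eqX : X -> X -> Prop} {eqY : Y -> Y -> Prop}
  {addX : X -> X -> X} {addY : Y -> Y -> Y} {zeroX : X} {zeroY : Y}
  {ract : X -> R -> X} {lact : R -> Y -> Y} {PX : X -> Prop} {PY : Y -> Prop}.
Local Notation teqXY := (teq eqX eqY addX addY zeroX zeroY ract lact PX PY).

Lemma eq_big_teq (V : zmodType) (f : X -> Y -> V) s t :
  (forall x x' y y', PX x -> PX x' -> PY y -> PY y' -> eqX x x' -> eqY y y' ->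
     f x y = f x' y') ->
  (forall x x' y, PX x -> PX x' -> PY y -> f (addX x x') y = f x y + f x' y) ->
  (forall x y y', PX x -> PY y -> PY y' -> f x (addY y y') = f x y + f x y') ->
  (forall y, PY y -> f zeroX y = 0) ->
  (forall x, PX x -> f x zeroY = 0) ->
  (forall x r y, PX x -> PY y -> f (ract x r) y = f x (lact r y)) ->
  teqXY s t -> \sum_(p <- s) f p.1 p.2 = \sum_(p <- t) f p.1 p.2.
Proof.
move=> feqv faddl faddr fzerol fzeror fbal; elim=> //=.
- by move=> ? ? ? _ -> _ ->.
- by move=> s1 s2 t1 t2 _ E1 _ E2; rewrite !big_cat E1 E2.
- by move=> s0 t0; rewrite !big_cat /= addrC.
- by move=> *; rewrite !big_seq1 /=; apply: feqv.
- by move=> x x' y *; rewrite !big_cons !big_nil !addr0 faddl.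
- by move=> x y y' *; rewrite !big_cons !big_nil !addr0 faddr.
- by move=> y *; rewrite big_seq1 big_nil fzerol.
- by move=> x *; rewrite big_seq1 big_nil fzeror.
- by move=> x r y *; rewrite !big_seq1 fbal.
Qed.

Lemma teq_flatten (I : Type) (a b : I -> seq (X * Y)) l :
  List.Forall (fun i => teqXY (a i) (b i)) l ->
  teqXY (flatten (map a l)) (flatten (map b l)).
Proof. by elim=> [|i l' ? _ IHl] /=; [apply: teq_refl | apply: teq_cat]. Qed.

Lemma teq_map (I : Type) (f g : I -> X * Y) l :
  List.Forall (fun i => teqXY [:: f i] [:: g i]) l -> teqXY (map f l) (map g l).
Proof. by rewrite -(flatten_map1 f) -(flatten_map1 g); apply: teq_flatten. Qed.

Lemma teq_catCA s t u : teqXY (s ++ t ++ u) (t ++ s ++ u).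
Proof. by rewrite !catA; apply: teq_cat (teq_comm s t) (teq_refl u). Qed.

Lemma teq_flatten_cons (I : Type) (a : I -> X * Y) (b : I -> seq (X * Y)) l :
  teqXY (flatten [seq a i :: b i | i <- l]) (map a l ++ flatten (map b l)).
Proof.
elim: l => [|i l IHl] /=; first exact: teq_refl.
apply: (teq_cat (teq_refl [:: a i])).
exact: teq_trans (teq_cat (teq_refl (b i)) IHl) (teq_catCA _ _ _).
Qed.

Lemma teq_flatten_exchange (I J : Type) (f : I -> J -> X * Y) l1 l2 :
  teqXY (flatten [seq [seq f i j | j <- l2] | i <- l1])
        (flatten [seq [seq f i j | i <- l1] | j <- l2]).
Proof.
elim: l1 => [|i l1 IHl1] /=; first by elim: l2 => [|j l2 IHl2] //=; apply: teq_refl.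
apply: teq_trans (teq_cat (teq_refl _) IHl1) _.
exact: teq_sym (teq_flatten_cons (f i) (fun j => [seq f i' j | i' <- l1]) l2).
Qed.

Section SumClosed.
Hypotheses (addX_closed : forall x x', PX x -> PX x' -> PX (addX x x'))
  (zeroX_closed : PX zeroX)
  (addY_closed : forall y y', PY y -> PY y' -> PY (addY y y'))
  (zeroY_closed : PY zeroY).

Lemma teq_sumr (Z : Type) (F : Z -> Y) x l : PX x -> List.Forall (fun z => PY (F z)) l ->
  teqXY [:: (x, foldr addY zeroY (map F l))] [seq (x, F z) | z <- l].
Proof.
move=> Px; elim=> [|z l' PFz PFl IHl] /=; first exact: teq_zeror.
have PFl' : PY (foldr addY zeroY (map F l')).
  by apply: foldr_closed => //; elim: PFl; constructor.
exact: teq_trans (teq_addr Px PFz PFl') (teq_cat (teq_refl [:: (x, F z)]) IHl).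
Qed.

Lemma teq_suml (Z : Type) (F : Z -> X) y l : PY y -> List.Forall (fun z => PX (F z)) l ->
  teqXY [:: (foldr addX zeroX (map F l), y)] [seq (F z, y) | z <- l].
Proof.
move=> Py; elim=> [|z l' PFz PFl IHl] /=; first exact: teq_zerol.
have PFl' : PX (foldr addX zeroX (map F l')).
  by apply: foldr_closed => //; elim: PFl; constructor.
exact: teq_trans (teq_addl PFz PFl' Py) (teq_cat (teq_refl [:: (F z, y)]) IHl).
Qed.
End SumClosed.

End FormalTensor.

Section TensorMorphism.
Context {R X Y : Type} {eqX : X -> X -> Prop} {eqY : Y -> Y -> Prop}
  {addX : X -> X -> X} {addY : Y -> Y -> Y} {zeroX : X} {zeroY : Y}
  {ract : X -> R -> X} {lact : R -> Y -> Y} {PX : X -> Prop} {PY : Y -> Prop}.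
Context {R' X' Y' : Type} {eqX' : X' -> X' -> Prop} {eqY' : Y' -> Y' -> Prop}
  {addX' : X' -> X' -> X'} {addY' : Y' -> Y' -> Y'} {zeroX' : X'} {zeroY' : Y'}
  {ract' : X' -> R' -> X'} {lact' : R' -> Y' -> Y'} {PX' : X' -> Prop} {PY' : Y' -> Prop}.
Local Notation teqXY := (teq eqX eqY addX addY zeroX zeroY ract lact PX PY).
Local Notation teqXY' := (teq eqX' eqY' addX' addY' zeroX' zeroY' ract' lact' PX' PY').

Lemma teq_map_morph (h : X * Y -> X' * Y') s t :
  (forall x x' y y', PX x -> PX x' -> PY y -> PY y' -> eqX x x' -> eqY y y' ->
     teqXY' [:: h (x, y)] [:: h (x', y')]) ->
  (forall x x' y, PX x -> PX x' -> PY y ->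
     teqXY' [:: h (addX x x', y)] [:: h (x, y); h (x', y)]) ->
  (forall x y y', PX x -> PY y -> PY y' ->
     teqXY' [:: h (x, addY y y')] [:: h (x, y); h (x, y')]) ->
  (forall y, PY y -> teqXY' [:: h (zeroX, y)] [::]) ->
  (forall x, PX x -> teqXY' [:: h (x, zeroY)] [::]) ->
  (forall x r y, PX x -> PY y -> teqXY' [:: h (ract x r, y)] [:: h (x, lact r y)]) ->
  teqXY s t -> teqXY' (map h s) (map h t).
Proof.
move=> heqv haddl haddr hzerol hzeror hbal; elim=> /=; try by eauto.
- by move=> *; apply: teq_refl.
- by move=> *; apply: teq_sym.
- by move=> *; apply: teq_trans; eauto.
- by move=> *; rewrite !map_cat; apply: teq_cat.
- by move=> *; rewrite !map_cat; apply: teq_comm.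
Qed.
End TensorMorphism.

Lemma additive_fun0 (U V : zmodType) (f : U -> V) : additive_fun f -> f 0 = 0.
Proof. by move=> fD; apply: (addrI (f 0)); rewrite -fD !addr0. Qed.

Lemma additive_fun_sum (U V : zmodType) (f : U -> V) (I : Type) (l : seq I) (g : I -> U) :
  additive_fun f -> f (\sum_(i <- l) g i) = \sum_(i <- l) f (g i).
Proof.
move=> fD; elim: l => [|i l IHl]; first by rewrite !big_nil additive_fun0.
by rewrite !big_cons fD IHl.
Qed.

Lemma eq_big_Forall (V : zmodType) (I : Type) (P : I -> Prop) (l : seq I) (F G : I -> V) :
  List.Forall P l -> (forall i, P i -> F i = G i) -> \sum_(i <- l) F i = \sum_(i <- l) G i.
Proof.
move=> + FG; elim=> [|i l' Pi _ IHl]; first by rewrite !big_nil.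
by rewrite !big_cons FG // IHl.
Qed.

Lemma foldr_add_sum (V : zmodType) (I : Type) (F : I -> V) l :
  foldr +%R 0 (map F l) = \sum_(i <- l) F i.
Proof. by elim: l => [|i l IHl] /=; rewrite ?big_nil ?big_cons ?IHl. Qed.

Lemma foldr_add_fun (U V : zmodType) (I : Type) (F : I -> U -> V) l x :
  foldr (fun f g m => f m + g m) (fun _ => 0) (map F l) x = \sum_(i <- l) F i x.
Proof. by elim: l => [|i l IHl] /=; rewrite ?big_nil ?big_cons ?IHl. Qed.

Section Bimodule.
Variables (A B : pzRingType) (M : zmodType) (lB : B -> M -> M) (rA : M -> A -> M).
Hypothesis HBM : is_bimodule lB rA.

Lemma lBDr b m m' : lB b (m + m') = lB b m + lB b m'.
Proof. by case: HBM => -> _. Qed.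
Lemma lBDl b b' m : lB (b + b') m = lB b m + lB b' m.
Proof. by case: HBM => _ [-> _]. Qed.
Lemma lBM b b' m : lB (b * b') m = lB b (lB b' m).
Proof. by case: HBM => _ [_ [-> _]]. Qed.
Lemma lB1 m : lB 1 m = m.
Proof. by case: HBM => _ [_ [_ [-> _]]]. Qed.
Lemma rADl m m' a : rA (m + m') a = rA m a + rA m' a.
Proof. by case: HBM => _ [_ [_ [_ [-> _]]]]. Qed.
Lemma rADr m a a' : rA m (a + a') = rA m a + rA m a'.
Proof. by case: HBM => _ [_ [_ [_ [_ [-> _]]]]]. Qed.
Lemma rAM m a a' : rA m (a * a') = rA (rA m a) a'.
Proof. by case: HBM => _ [_ [_ [_ [_ [_ [-> _]]]]]]. Qed.
Lemma lB_rA b m a : lB b (rA m a) = rA (lB b m) a.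
Proof. by case: HBM => _ [_ [_ [_ [_ [_ [_ [_ ->]]]]]]]. Qed.

Lemma lB0r b : lB b 0 = 0. Proof. by apply: additive_fun0 => m m'; apply: lBDr. Qed.
Lemma lB0l m : lB 0 m = 0. Proof. by apply: (additive_fun0 (f := lB^~ m)) => b b'; apply: lBDl. Qed.
Lemma rA0l a : rA 0 a = 0. Proof. by apply: (additive_fun0 (f := rA^~ a)) => m m'; apply: rADl. Qed.
Lemma rA0r m : rA m 0 = 0. Proof. by apply: additive_fun0 => a a'; apply: rADr. Qed.

Lemma lB_sumr b (I : Type) (l : seq I) g : lB b (\sum_(i <- l) g i) = \sum_(i <- l) lB b (g i).
Proof. by apply: additive_fun_sum => m m'; apply: lBDr. Qed.
Lemma lB_suml m (I : Type) (l : seq I) g : lB (\sum_(i <- l) g i) m = \sum_(i <- l) lB (g i) m.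
Proof. by apply: (additive_fun_sum (f := lB^~ m)) => b b'; apply: lBDl. Qed.
Lemma rA_suml a (I : Type) (l : seq I) g : rA (\sum_(i <- l) g i) a = \sum_(i <- l) rA (g i) a.
Proof. by apply: (additive_fun_sum (f := rA^~ a)) => m m'; apply: rADl. Qed.
Lemma rA_sumr m (I : Type) (l : seq I) g : rA m (\sum_(i <- l) g i) = \sum_(i <- l) rA m (g i).
Proof. by apply: additive_fun_sum => a a'; apply: rADr. Qed.

Section Dual.
Variable f : M -> A.
Hypothesis f_dual : Mdual rA f.

Lemma MdualD m m' : f (m + m') = f m + f m'. Proof. by case: f_dual. Qed.
Lemma Mdual_rA m a : f (rA m a) = f m * a. Proof. by case: f_dual. Qed.
Lemma Mdual0 : f 0 = 0. Proof. by case: f_dual => /additive_fun0. Qed.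
Lemma Mdual_sum (I : Type) (l : seq I) g : f (\sum_(i <- l) g i) = \sum_(i <- l) f (g i).
Proof. by case: f_dual => /additive_fun_sum. Qed.
End Dual.

Lemma Mldual0 g : Mldual lB g -> g 0 = 0.
Proof. by case=> /additive_fun0. Qed.

Lemma Mdual_zero : Mdual rA (fun _ => 0).
Proof. by split=> [m m'|m a]; rewrite ?addr0 ?mul0r. Qed.
Lemma Mdual_add f g : Mdual rA f -> Mdual rA g -> Mdual rA (fun m => f m + g m).
Proof.
move=> fM gM; split=> [m m'|m a]; first by rewrite !MdualD // addrACA.
by rewrite !Mdual_rA // mulrDl.
Qed.
Lemma Mdual_lmul a f : Mdual rA f -> Mdual rA (fun m => a * f m).
Proof. by move=> fM; split=> [m m'|m a']; rewrite ?MdualD ?Mdual_rA ?mulrDr ?mulrA. Qed.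
Lemma Mdual_lB b f : Mdual rA f -> Mdual rA (fun m => f (lB b m)).
Proof. by move=> fM; split=> [m m'|m a]; rewrite ?lBDr ?MdualD // lB_rA Mdual_rA. Qed.
Lemma Mdual_sum_fun (I : Type) (l : seq I) (F : I -> M -> A) :
  List.Forall (fun i => Mdual rA (F i)) l -> Mdual rA (fun m => \sum_(i <- l) F i m).
Proof.
move=> FM; split=> [m m'|m a].
  by rewrite -big_split; apply: (eq_big_Forall FM) => i /MdualD.
by rewrite mulr_suml; apply: (eq_big_Forall FM) => i /Mdual_rA.
Qed.

Section Endo.
Variable s : M -> M.
Hypothesis s_end : Mend rA s.

Lemma MendD m m' : s (m + m') = s m + s m'. Proof. by case: s_end. Qed.
Lemma Mend_rA m a : s (rA m a) = rA (s m) a. Proof. by case: s_end. Qed.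
Lemma Mend0 : s 0 = 0. Proof. by case: s_end => /additive_fun0. Qed.
Lemma Mend_sum (I : Type) (l : seq I) g : s (\sum_(i <- l) g i) = \sum_(i <- l) s (g i).
Proof. by case: s_end => /additive_fun_sum. Qed.
End Endo.

Lemma Mend_id : Mend rA (fun m => m). Proof. by split. Qed.
Lemma Mend_comp s t : Mend rA s -> Mend rA t -> Mend rA (fun m => s (t m)).
Proof.
by move=> sM tM; split=> [m m'|m a]; rewrite ?(MendD tM) ?(MendD sM) ?(Mend_rA tM) ?(Mend_rA sM).
Qed.
Lemma Mend_add s t : Mend rA s -> Mend rA t -> Mend rA (Sadd s t).
Proof.
move=> sM tM; split=> [m m'|m a]; rewrite /Sadd.
  by rewrite (MendD sM) (MendD tM) addrACA.
by rewrite (Mend_rA sM) (Mend_rA tM) rADl.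
Qed.
Lemma Mend_lB b : Mend rA (lB b).
Proof. by split=> [m m'|m a]; rewrite ?lBDr ?lB_rA. Qed.

Lemma Mend_zero : Mend rA (@Szero M).
Proof. by split=> [m m'|m a]; rewrite /Szero ?addr0 ?rA0l. Qed.
Lemma Mend_sum_fun (I : Type) (l : seq I) (F : I -> M -> M) :
  List.Forall (fun i => Mend rA (F i)) l -> Mend rA (fun m => \sum_(i <- l) F i m).
Proof.
move=> FM; split=> [m m'|m a].
  by rewrite -big_split; apply: (eq_big_Forall FM) => i /MendD.
by rewrite rA_suml; apply: (eq_big_Forall FM) => i /Mend_rA.
Qed.

Lemma Mend_dual_comp (g : A -> M) f : additive_fun g -> (forall a a', g (a * a') = rA (g a) a') ->
  Mdual rA f -> Mend rA (fun x => g (f x)).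
Proof.
move=> gD gM fM; split=> [x y|x a]; first by rewrite (MdualD fM) gD.
by rewrite (Mdual_rA fM) gM.
Qed.

Lemma Mend_rank1 m f : Mdual rA f -> Mend rA (fun x => rA m (f x)).
Proof. by apply: Mend_dual_comp => [a a'|a a']; rewrite ?rADr ?rAM. Qed.

Lemma swe_sumr s t (I : Type) (F : I -> M -> M) l :
  Mend rA s -> Mend rA t -> List.Forall (fun i => Mend rA (F i)) l ->
  (forall x, t x = \sum_(i <- l) F i x) -> swe_eq lB rA [:: (s, t)] [seq (s, F i) | i <- l].
Proof.
move=> sM tM FM tE; pose fs := foldr (@Sadd M) (@Szero M) (map F l).
have foldM : Mend rA fs.
  by apply: foldr_closed Mend_add Mend_zero _; elim: FM; constructor.
apply: (teq_trans (t := [:: (s, fs)])).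
  by apply: teq_eqv => // x; rewrite tE /fs (foldr_add_fun F).
by apply: teq_sumr => //; [apply: Mend_add | apply: Mend_zero].
Qed.

Lemma swe_suml s t (I : Type) (F : I -> M -> M) l :
  Mend rA s -> Mend rA t -> List.Forall (fun i => Mend rA (F i)) l ->
  (forall x, s x = \sum_(i <- l) F i x) -> swe_eq lB rA [:: (s, t)] [seq (F i, t) | i <- l].
Proof.
move=> sM tM FM sE; pose fs := foldr (@Sadd M) (@Szero M) (map F l).
have foldM : Mend rA fs.
  by apply: foldr_closed Mend_add Mend_zero _; elim: FM; constructor.
apply: (teq_trans (t := [:: (fs, t)])).
  by apply: teq_eqv => // x; rewrite sE /fs (foldr_add_fun F).
by apply: teq_suml => //; [apply: Mend_add | apply: Mend_zero].
Qed.

Lemma comat_sumr phi (I : Type) (F : I -> M) l : Mdual rA phi ->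
  comat_eq lB rA [:: (phi, \sum_(i <- l) F i)] [seq (phi, F i) | i <- l].
Proof.
move=> phiM; rewrite -foldr_add_sum.
by apply: teq_sumr => //; apply: Forall_all.
Qed.

Lemma comat_suml phi (I : Type) (F : I -> M -> A) m l :
  Mdual rA phi -> List.Forall (fun i => Mdual rA (F i)) l ->
  (forall x, phi x = \sum_(i <- l) F i x) -> comat_eq lB rA [:: (phi, m)] [seq (F i, m) | i <- l].
Proof.
move=> phiM FM phiE; pose fs := foldr (fun f g (m : M) => f m + g m) (fun _ => 0 : A) (map F l).
have foldM : Mdual rA fs.
  by apply: foldr_closed Mdual_add Mdual_zero _; elim: FM; constructor.
apply: (teq_trans (t := [:: (fs, m)])).
  by apply: teq_eqv => // x; rewrite phiE /fs foldr_add_fun.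
by apply: teq_suml => //; [apply: Mdual_add | apply: Mdual_zero].
Qed.

Lemma comat_to_swe (g : A -> M) rho c c' :
  additive_fun g -> (forall a a', g (a * a') = rA (g a) a') -> Mdual rA rho ->
  comat_eq lB rA c c' ->
  swe_eq lB rA [seq (fun x => g (p.1 x), fun x => rA p.2 (rho x)) | p <- c]
               [seq (fun x => g (p.1 x), fun x => rA p.2 (rho x)) | p <- c'].
Proof.
move=> gD gM rhoM; have gphiM phi : Mdual rA phi -> Mend rA (fun x => g (phi x)).
  exact: Mend_dual_comp.
have rM m : Mend rA (fun x => rA m (rho x)) by apply: Mend_rank1.
apply: teq_map_morph => /=.
- by move=> phi phi' m m' /gphiM ? /gphiM ? _ _ phiphi' <-; apply: teq_eqv => // x; rewrite phiphi'.
- move=> phi phi' m phiM phi'M _; have ? := gphiM _ (Mdual_add phiM phi'M).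
  move: phiM phi'M => /gphiM gphi /gphiM gphi'.
  apply: (teq_trans (t := [:: (Sadd (fun x => g (phi x)) (fun x => g (phi' x)), fun x => rA m (rho x))])).
    have ? := Mend_add gphi gphi'.
    by apply: teq_eqv => // x; rewrite /Sadd /= gD.
  exact: teq_addl.
- move=> phi m m' /gphiM gphi _ _.
  apply: (teq_trans (t := [:: (fun x => g (phi x), Sadd (fun x => rA m (rho x)) (fun x => rA m' (rho x)))])).
    have ? := Mend_add (rM m) (rM m').
    by apply: teq_eqv => // x; rewrite /Sadd rADl.
  exact: teq_addr.
- move=> m _; have ? := gphiM _ Mdual_zero.
  apply: (teq_trans (t := [:: (@Szero M, fun x => rA m (rho x))])); last exact: teq_zerol.
  have ? := Mend_zero.
  by apply: teq_eqv => // x; rewrite /Szero /= additive_fun0.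
- move=> phi /gphiM gphi.
  apply: (teq_trans (t := [:: (fun x => g (phi x), @Szero M)])); last exact: teq_zeror.
  have ? := Mend_zero.
  by apply: teq_eqv => // x; rewrite /Szero rA0l.
- move=> phi b m /gphiM gphi _.
  apply: teq_trans (teq_bal (x := fun x => g (phi x)) b (y := fun x => rA m (rho x)) gphi (rM m)) _.
  have ? := Mend_comp (Mend_lB b) (rM m).
  have ? := rM (lB b m).
  by apply: teq_eqv => // x; rewrite lB_rA.
Qed.
End Bimodule.

Section DualBasis.
Variables (A : pzRingType) (M : zmodType) (rA : M -> A -> M)
  (n : nat) (e : 'I_n -> M) (es : 'I_n -> M -> A).
Hypothesis dbasis : is_dual_basis rA e es.

Lemma dual_basis_dual i : Mdual rA (es i). Proof. by case: dbasis. Qed.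

Lemma dual_basis_sum m : \sum_(i <- enum 'I_n) rA (e i) (es i m) = m.
Proof. by case: dbasis => _ sum_e; rewrite big_enum sum_e. Qed.

Lemma dual_basis_dual_sum f m : Mdual rA f -> f m = \sum_(k <- enum 'I_n) f (e k) * es k m.
Proof.
move=> fM; rewrite -{1}(dual_basis_sum m) (Mdual_sum fM).
by apply: eq_bigr => k _; rewrite (Mdual_rA fM).
Qed.

Lemma dual_basis_end_sum t m : Mend rA t -> t m = \sum_(k <- enum 'I_n) rA (t (e k)) (es k m).
Proof.
move=> tM; rewrite -{1}(dual_basis_sum m) (Mend_sum tM).
by apply: eq_bigr => k _; rewrite (Mend_rA tM).
Qed.
End DualBasis.

Lemma separable_central_element (A B : pzRingType) (M : zmodType)
    (lB : B -> M -> M) (rA : M -> A -> M) :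
  separable_bimodule lB rA -> exists sep : Etens B M,
    [/\ Ewf lB sep, forall b, Eeq lB rA (Elact lB b sep) (Eract sep b) & Eev sep = 1].
Proof.
case=> sigma [sigma_wf [_ [sigmaMl [sigmaMr sigma_ev]]]]; exists (sigma 1); split=> // b.
apply: teq_trans (teq_sym (sigmaMl b 1)) _.
by rewrite mulr1 -[in sigma b](mul1r b); apply: sigmaMr.
Qed.

Section SeparableComatrix.
Variables (A B : pzRingType) (M : zmodType) (lB : B -> M -> M) (rA : M -> A -> M)
  (n : nat) (e : 'I_n -> M) (es : 'I_n -> M -> A).
Hypotheses (HBM : is_bimodule lB rA) (dbasis : is_dual_basis rA e es).
Variable sep : Etens B M.
Hypotheses (sep_wf : Ewf lB sep) (sep_central : forall b, Eeq lB rA (Elact lB b sep) (Eract sep b))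
  (sep_ev : Eev sep = 1).

Let sep_dual : List.Forall (fun j : M * (M -> B) => Mldual lB j.2) sep.
Proof. by apply: List.Forall_impl (proj1 (allP_Forall _ _ _) sep_wf) => j []. Qed.

Definition sep_pairing (m : M) (f : M -> A) : B := \sum_(j <- sep) j.2 (rA m (f j.1)).

Lemma sep_pairingDl m m' f : sep_pairing (m + m') f = sep_pairing m f + sep_pairing m' f.
Proof.
rewrite /sep_pairing -big_split; apply: (eq_big_Forall sep_dual) => j [jD _] /=.
by rewrite (rADl HBM) jD.
Qed.

Lemma sep_pairing0l f : sep_pairing 0 f = 0.
Proof.
rewrite /sep_pairing (eq_big_Forall sep_dual (G := fun=> 0)) ?big1_eq // => j /Mldual0.
by rewrite (rA0l HBM).
Qed.

Lemma sep_pairing_lB b m f : sep_pairing (lB b m) f = b * sep_pairing m f.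
Proof.
rewrite /sep_pairing mulr_sumr; apply: (eq_big_Forall sep_dual) => j [_ jlB].
by rewrite -(lB_rA HBM) jlB.
Qed.

Lemma sep_pairing_rA m a f : sep_pairing (rA m a) f = sep_pairing m (fun x => a * f x).
Proof. by apply: eq_bigr => j _; rewrite (rAM HBM). Qed.

Lemma sep_pairingDr m f f' :
  sep_pairing m (fun x => f x + f' x) = sep_pairing m f + sep_pairing m f'.
Proof.
rewrite /sep_pairing -big_split; apply: (eq_big_Forall sep_dual) => j [jD _] /=.
by rewrite (rADr HBM) jD.
Qed.

Lemma sep_pairing0r m : sep_pairing m (fun=> 0) = 0.
Proof.
rewrite /sep_pairing (eq_big_Forall sep_dual (G := fun=> 0)) ?big1_eq // => j /Mldual0.
by rewrite (rA0r HBM).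
Qed.

Lemma eq_sep_pairing m f f' : feq f f' -> sep_pairing m f = sep_pairing m f'.
Proof. by move=> ff'; apply: eq_bigr => j _; rewrite ff'. Qed.

(* Centrality of [sep] is what makes the pairing balanced over [B]. *)
Lemma sep_pairing_lBr m f b : Mdual rA f ->
  sep_pairing m (fun x => f (lB b x)) = sep_pairing m f * b.
Proof.
move=> fM; rewrite /sep_pairing mulr_suml.
have := eq_big_teq (f := fun x (g : M -> B) => g (rA m (f x))) _ _ _ _ _ _ (sep_central b).
rewrite !big_map => -> //=.
- by move=> x _ g g' _ _ _ _ <-.
- by move=> x x' g _ _ [gD _]; rewrite (MdualD fM) (rADr HBM) gD.
- by move=> g /Mldual0 g0; rewrite (Mdual0 fM) (rA0r HBM) g0.
- by move=> x a g _ _; rewrite (Mdual_rA fM) (rAM HBM).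
Qed.

Definition sep_gamma (c c' : comat A M) : A :=
  \sum_(p <- c) \sum_(q <- c') p.1 (lB (sep_pairing p.2 q.1) q.2).
Definition sep_cointegral (u : seq (comat A M * comat A M)) : A :=
  \sum_(pr <- u) sep_gamma pr.1 pr.2.

Lemma comat_wf_dual c : comat_wf rA c -> List.Forall (fun p : (M -> A) * M => Mdual rA p.1) c.
Proof. by move/allP_Forall; apply: List.Forall_impl => p []. Qed.

Lemma sep_gamma_eql c1 c2 c' : comat_eq lB rA c1 c2 -> sep_gamma c1 c' = sep_gamma c2 c'.
Proof.
apply: (eq_big_teq (f := fun phi m => \sum_(q <- c') phi (lB (sep_pairing m q.1) q.2))).
- by move=> phi phi' m _ _ _ _ _ phiphi' <-; apply: eq_bigr => q _; rewrite phiphi'.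
- by move=> phi phi' m _ _ _; rewrite -big_split.
- move=> phi m m' phiM _ _; rewrite -big_split; apply: eq_bigr => q _ /=.
  by rewrite sep_pairingDl (lBDl HBM) (MdualD phiM).
- by move=> m _; rewrite big1.
- move=> phi phiM; rewrite big1 // => q _.
  by rewrite sep_pairing0l (lB0l HBM) (Mdual0 phiM).
- by move=> phi b m _ _; apply: eq_bigr => q _; rewrite sep_pairing_lB (lBM HBM).
Qed.

Lemma sep_gamma_eqr c c1' c2' : comat_wf rA c -> comat_eq lB rA c1' c2' ->
  sep_gamma c c1' = sep_gamma c c2'.
Proof.
move=> /comat_wf_dual cM; rewrite /sep_gamma (exchange_big _ c c1') (exchange_big _ c c2').
apply: (eq_big_teq (f := fun f m => \sum_(p <- c) p.1 (lB (sep_pairing p.2 f) m))).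
- move=> f f' m _ _ _ _ _ ff' <-; apply: eq_bigr => p _.
  by rewrite (eq_sep_pairing _ ff').
- move=> f f' m _ _ _; rewrite -big_split; apply: (eq_big_Forall cM) => p pM /=.
  by rewrite sep_pairingDr (lBDl HBM) (MdualD pM).
- move=> f m m' _ _ _; rewrite -big_split; apply: (eq_big_Forall cM) => p pM /=.
  by rewrite (lBDr HBM) (MdualD pM).
- move=> m _; rewrite (eq_big_Forall cM (G := fun=> 0)) ?big1_eq // => p pM.
  by rewrite sep_pairing0r (lB0l HBM) (Mdual0 pM).
- move=> f _; rewrite (eq_big_Forall cM (G := fun=> 0)) ?big1_eq // => p pM.
  by rewrite (lB0r HBM) (Mdual0 pM).
- by move=> f b m fM _; apply: eq_bigr => p _; rewrite sep_pairing_lBr // (lBM HBM).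
Qed.

Lemma sep_cointegral_eq u v :
  CCeq (comat_eq lB rA) cat [::] (@comat_lact A M) (comat_ract rA) (comat_wf rA) u v ->
  sep_cointegral u = sep_cointegral v.
Proof.
apply: (eq_big_teq (f := sep_gamma)).
- by move=> c1 c2 c1' c2' _ c2W _ _ c12 c12'; rewrite (sep_gamma_eql _ c12) (sep_gamma_eqr c2W c12').
- by move=> c1 c2 c' _ _ _; rewrite /sep_gamma big_cat.
- by move=> c c1' c2' _ _ _; rewrite /sep_gamma -big_split; apply: eq_bigr => p _; rewrite big_cat.
- by move=> c' _; rewrite /sep_gamma big_nil.
- by move=> c _; rewrite /sep_gamma big1 // => p _; rewrite big_nil.
- move=> c a c' _ _; rewrite /sep_gamma big_map; apply: eq_bigr => p _.
  by rewrite big_map; apply: eq_bigr => q _; rewrite sep_pairing_rA.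
Qed.

Lemma sep_pairing_basis : \sum_(i <- enum 'I_n) sep_pairing (e i) (es i) = 1.
Proof.
rewrite -sep_ev /sep_pairing exchange_big; apply: (eq_big_Forall sep_dual) => j jM /=.
by rewrite -(additive_fun_sum _ _ (proj1 jM)) (dual_basis_sum dbasis).
Qed.

Lemma sep_cointegral_counit c : comat_wf rA c ->
  sep_cointegral (comat_Delta e es c) = comat_eps c.
Proof.
move=> /comat_wf_dual cM; rewrite /sep_cointegral /comat_Delta big_flatten big_map.
apply: (eq_big_Forall cM) => p pM; rewrite big_map.
under eq_bigr do rewrite /sep_gamma !big_seq1 /=.
by rewrite -(Mdual_sum pM) -(lB_suml HBM) sep_pairing_basis (lB1 HBM).
Qed.

Lemma sep_cointegral_lact a c c' :
  sep_cointegral [:: (comat_lact a c, c')] = a * sep_cointegral [:: (c, c')].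
Proof.
rewrite /sep_cointegral !big_seq1 /sep_gamma big_map mulr_sumr.
by apply: eq_bigr => p _; rewrite mulr_sumr.
Qed.

Lemma sep_cointegral_ract a c c' : comat_wf rA c ->
  sep_cointegral [:: (c, comat_ract rA c' a)] = sep_cointegral [:: (c, c')] * a.
Proof.
move=> /comat_wf_dual cM; rewrite /sep_cointegral !big_seq1 /sep_gamma mulr_suml.
apply: (eq_big_Forall cM) => p pM; rewrite big_map mulr_suml.
by apply: eq_bigr => q _; rewrite (lB_rA HBM) (Mdual_rA pM).
Qed.

Definition sep_term (p q : (M -> A) * M) := (p.1, lB (sep_pairing p.2 q.1) q.2).
Definition sep_double (c c' : comat A M) : comat A M :=
  flatten [seq [seq sep_term p q | q <- c'] | p <- c].

Lemma sep_coassoc_l c c' : comat_wf rA c ->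
  comat_eq lB rA
    (sumC cat [::] [seq comat_ract rA p.1 (sep_cointegral [:: (p.2, c')]) | p <- comat_Delta e es c])
    (sep_double c c').
Proof.
move=> /comat_wf_dual cM; rewrite sumC_cat /comat_Delta flatten_map_flatten.
apply: teq_flatten; apply: List.Forall_impl cM => p pM.
pose y := \sum_(q <- c') lB (sep_pairing p.2 q.1) q.2.
rewrite (flatten_map_seq1 (k := fun i => (p.1, rA (e i) (es i y)))); last first.
  move=> i /=; rewrite /sep_cointegral big_seq1 /sep_gamma big_seq1.
  by rewrite (Mdual_sum (dual_basis_dual dbasis i)).
apply: teq_trans (teq_sym (comat_sumr lB _ _ pM)) _.
by rewrite (dual_basis_sum dbasis); apply: comat_sumr.
Qed.

Lemma sep_coassoc_r c c' : comat_wf rA c ->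
  comat_eq lB rA
    (sumC cat [::] [seq comat_lact (sep_cointegral [:: (c, p.1)]) p.2 | p <- comat_Delta e es c'])
    (sep_double c c').
Proof.
move=> cW; have cM := comat_wf_dual cW.
apply: teq_trans (teq_sym (teq_flatten_exchange sep_term c c')).
rewrite sumC_cat /comat_Delta flatten_map_flatten.
apply: teq_flatten; apply: Forall_all => q.
pose g i := sep_cointegral [:: (c, [:: (q.1, e i)])].
rewrite (flatten_map_seq1 (k := fun i => (fun x => g i * es i x, q.2))); last by [].
have esM i : Mdual rA (fun x => g i * es i x).
  exact: Mdual_lmul (dual_basis_dual dbasis i).
pose h x := \sum_(p <- c) p.1 (lB (sep_pairing p.2 q.1) x).
have cqM : List.Forall (fun p : (M -> A) * M => Mdual rA (fun x => p.1 (lB (sep_pairing p.2 q.1) x))) c.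
  by apply: List.Forall_impl cM => p; apply: Mdual_lB.
have hM : Mdual rA h by apply: Mdual_sum_fun.
have hE x : h x = \sum_(i <- enum 'I_n) g i * es i x.
  rewrite /g /sep_cointegral; under [RHS]eq_bigr do rewrite big_seq1 /sep_gamma mulr_suml.
  rewrite exchange_big; apply: (eq_big_Forall cM) => p pM /=.
  rewrite -{1}(dual_basis_sum dbasis x) (lB_sumr HBM) (Mdual_sum pM).
  by apply: eq_bigr => i _; rewrite big_seq1 (lB_rA HBM) (Mdual_rA pM).
apply: teq_trans (teq_sym (comat_suml lB q.2 hM (Forall_all _ esM) hE)) _.
apply: teq_trans (comat_suml lB q.2 hM cqM (fun x => erefl)) _.
apply: teq_map; apply: List.Forall_impl cM => p pM; exact: teq_bal.
Qed.

Lemma comatrix_coseparable_of_central : comatrix_coseparable lB rA e es.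
Proof.
exists sep_cointegral; split=> //; split; first by move=> u v _ _; apply: sep_cointegral_eq.
split; first by move=> u v _ _; rewrite /sep_cointegral big_cat.
split; first by move=> a c c' _ _ _; apply: sep_cointegral_lact.
split; first by move=> a c c' _ cW _; apply: sep_cointegral_ract.
split; last by move=> c; apply: sep_cointegral_counit.
by move=> c c' cW _; apply: teq_trans (sep_coassoc_l _ cW) (teq_sym (sep_coassoc_r _ cW)).
Qed.
End SeparableComatrix.

Section ComatrixSweedler.
Variables (A B : pzRingType) (M : zmodType) (lB : B -> M -> M) (rA : M -> A -> M)
  (n : nat) (e : 'I_n -> M) (es : 'I_n -> M -> A).
Hypotheses (HBM : is_bimodule lB rA) (dbasis : is_dual_basis rA e es).
Variable gamma : seq (comat A M * comat A M) -> A.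
Hypothesis gammaP : is_cointegral (@eq A) +%R *%R (fun _ => True) (comat_eq lB rA) cat [::]
  (@comat_lact A M) (comat_ract rA) (comat_wf rA) (comat_Delta e es) (@comat_eps A M) gamma.

Local Notation ceq := (comat_eq lB rA).
Local Notation cwf := (comat_wf rA).
Local Notation cceq := (CCeq ceq cat [::] (@comat_lact A M) (comat_ract rA) cwf).
Local Notation ccwf := (CCwf cwf).

Let es_dual := dual_basis_dual dbasis.
Let sum_es := dual_basis_sum dbasis.

Lemma gamma_eq u v : ccwf u -> ccwf v -> cceq u v -> gamma u = gamma v.
Proof. by case: gammaP => _ [+ _]; apply. Qed.
Lemma gamma_cat u v : ccwf u -> ccwf v -> gamma (u ++ v) = gamma u + gamma v.
Proof. by case: gammaP => _ [_ [+ _]]; apply. Qed.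
Lemma gamma_lact a c c' : cwf c -> cwf c' -> gamma [:: (comat_lact a c, c')] = a * gamma [:: (c, c')].
Proof. by case: gammaP => _ [_ [_ [+ _]]]; apply. Qed.
Lemma gamma_ract a c c' : cwf c -> cwf c' ->
  gamma [:: (c, comat_ract rA c' a)] = gamma [:: (c, c')] * a.
Proof. by case: gammaP => _ [_ [_ [_ [+ _]]]]; apply. Qed.
Lemma gamma_coassoc c c' : cwf c -> cwf c' ->
  ceq (sumC cat [::] [seq comat_ract rA p.1 (gamma [:: (p.2, c')]) | p <- comat_Delta e es c])
      (sumC cat [::] [seq comat_lact (gamma [:: (c, p.1)]) p.2 | p <- comat_Delta e es c']).
Proof. by case: gammaP => _ [_ [_ [_ [_ [+ _]]]]]; apply. Qed.
Lemma gamma_counit c : cwf c -> gamma (comat_Delta e es c) = comat_eps c.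
Proof. by case: gammaP => _ [_ [_ [_ [_ [_ +]]]]]; apply. Qed.

Lemma gamma_nil : gamma [::] = 0.
Proof. by apply: (addrI (gamma [::])); rewrite -gamma_cat // addr0. Qed.

Lemma gamma_sum u : ccwf u -> gamma u = \sum_(pr <- u) gamma [:: pr].
Proof.
elim: u => [|pr u IHu] /=; first by rewrite big_nil gamma_nil.
by case=> cW cW' uW; rewrite big_cons -IHu // -gamma_cat.
Qed.

Lemma cwf1 phi y : Mdual rA phi -> cwf [:: (phi, y)].
Proof. by split. Qed.

Definition Gm phi y psi z := gamma [:: ([:: (phi, y)], [:: (psi, z)])].

Lemma Gm_suml phi y psi z c : Mdual rA phi -> Mdual rA psi -> cwf c -> ceq [:: (phi, y)] c ->
  Gm phi y psi z = \sum_(p <- c) Gm p.1 p.2 psi z.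
Proof.
move=> phiM psiM cW phic; have cF := proj1 (allP_Forall _ _ _) cW.
have mapW : ccwf [seq ([:: p], [:: (psi, z)]) | p <- c].
  by elim: cF => //= p c' [pM _] _ IHc; split=> //; apply: cwf1.
transitivity (gamma [seq ([:: p], [:: (psi, z)]) | p <- c]).
  apply: gamma_eq => //.
  apply: (teq_trans (t := [:: (c, [:: (psi, z)])])).
    by apply: teq_eqv => //; apply: teq_refl.
  rewrite -{1}(flatten_seq1 c) -sumC_cat.
  apply: teq_suml => //; first exact: allP_cat.
  by apply: List.Forall_impl cF => p [pM _]; apply: cwf1.
by rewrite gamma_sum // big_map; apply: eq_bigr => -[].
Qed.

Lemma Gm_sumr phi y psi z d : Mdual rA phi -> Mdual rA psi -> cwf d -> ceq [:: (psi, z)] d ->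
  Gm phi y psi z = \sum_(q <- d) Gm phi y q.1 q.2.
Proof.
move=> phiM psiM dW psid; have dF := proj1 (allP_Forall _ _ _) dW.
have mapW : ccwf [seq ([:: (phi, y)], [:: q]) | q <- d].
  by elim: dF => //= q d' [qM _] _ IHd; split=> //; apply: cwf1.
transitivity (gamma [seq ([:: (phi, y)], [:: q]) | q <- d]).
  apply: gamma_eq => //.
  apply: (teq_trans (t := [:: ([:: (phi, y)], d)])).
    by apply: teq_eqv => //; apply: teq_refl.
  rewrite -{1}(flatten_seq1 d) -sumC_cat.
  apply: teq_sumr => //; first exact: allP_cat.
  by apply: List.Forall_impl dF => q [qM _]; apply: cwf1.
by rewrite gamma_sum // big_map; apply: eq_bigr => -[].
Qed.

Section GmLinear.
Variables (phi psi : M -> A).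
Hypotheses (phiM : Mdual rA phi) (psiM : Mdual rA psi).

Lemma Gm_lmul a y z : Gm (fun x => a * phi x) y psi z = a * Gm phi y psi z.
Proof. exact: gamma_lact (cwf1 y phiM) (cwf1 z psiM). Qed.

Lemma Gm_rA y z a : Gm phi y psi (rA z a) = Gm phi y psi z * a.
Proof. exact: gamma_ract (cwf1 y phiM) (cwf1 z psiM). Qed.

Lemma Gm_rAy y a z : Gm phi (rA y a) psi z = Gm phi y (fun x => a * psi x) z.
Proof.
have apsiM := Mdual_lmul a psiM.
apply: gamma_eq => //.
exact: (teq_bal (x := [:: (phi, y)]) a (y := [:: (psi, z)])).
Qed.

Lemma Gm_dual y : Mdual rA (Gm phi y psi).
Proof.
split=> [z z'|z a]; last exact: Gm_rA.
by rewrite (@Gm_sumr _ _ _ _ [:: (psi, z); (psi, z')]) ?big_cons ?big_nil ?addr0 //; apply: teq_addr.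
Qed.

Lemma Gm_additive_y z : additive_fun (fun y => Gm phi y psi z).
Proof.
move=> y y'.
by rewrite (@Gm_suml _ _ _ _ [:: (phi, y); (phi, y')]) ?big_cons ?big_nil ?addr0 //; apply: teq_addr.
Qed.
End GmLinear.

Lemma Gm_counit phi x : Mdual rA phi -> \sum_(l <- enum 'I_n) Gm phi (e l) (es l) x = phi x.
Proof.
move=> phiM; have := gamma_counit (cwf1 x phiM).
rewrite /comat_eps big_seq1 /comat_Delta /= cats0 => <-.
rewrite gamma_sum ?big_map //.
by elim: (enum 'I_n) => //= l ls ->; split; apply: cwf1.
Qed.

Lemma cwf_map (I : Type) (F : I -> M -> A) (G : I -> M) l :
  (forall i, Mdual rA (F i)) -> cwf [seq (F i, G i) | i <- l].
Proof. by move=> FM; elim: l => //= i l ->; split. Qed.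

Lemma comat_lB_expand i b y :
  ceq [:: (es i, lB b y)] [seq (fun x => es i (lB b (e k)) * es k x, y) | k <- enum 'I_n].
Proof.
have esbM := Mdual_lB HBM b (es_dual i).
have akM k : Mdual rA (fun x => es i (lB b (e k)) * es k x) by apply: Mdual_lmul.
apply: teq_trans (teq_sym (teq_bal (x := es i) b (y := y) (es_dual i) I)) _.
apply: (comat_suml lB y esbM (Forall_all _ akM)) => m.
by rewrite /= (dual_basis_dual_sum dbasis m esbM).
Qed.

Lemma Gm_lBy i b y psi z : Mdual rA psi ->
  Gm (es i) (lB b y) psi z = \sum_(k <- enum 'I_n) es i (lB b (e k)) * Gm (es k) y psi z.
Proof.
move=> psiM; rewrite (Gm_suml z _ _ _ (comat_lB_expand i b y)) // ?big_map; last first.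
  by apply: cwf_map => k; apply: Mdual_lmul.
by apply: eq_bigr => k _; rewrite Gm_lmul.
Qed.

Lemma Gm_lBz phi y l b x : Mdual rA phi ->
  Gm phi y (es l) (lB b x) = \sum_(k <- enum 'I_n) Gm phi (rA y (es l (lB b (e k)))) (es k) x.
Proof.
move=> phiM; rewrite (Gm_sumr y _ _ _ (comat_lB_expand l b x)) // ?big_map; last first.
  by apply: cwf_map => k; apply: Mdual_lmul.
by apply: eq_bigr => k _; rewrite Gm_rAy.
Qed.

(* [Gamma u] applies [Gamma1] to the expansion [u = sum_l u(e_l) e_l^*] of [u] in [S]. *)
Definition Gamma1 y psi : M -> M := fun z => \sum_(i <- enum 'I_n) rA (e i) (Gm (es i) y psi z).
Definition Gamma (u : M -> M) : M -> M := fun x => \sum_(l <- enum 'I_n) Gamma1 (u (e l)) (es l) x.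

Lemma Gamma1_end y psi : Mdual rA psi -> Mend rA (Gamma1 y psi).
Proof.
move=> psiM; apply: (Mend_sum_fun HBM); apply: Forall_all => i.
exact (Mend_rank1 HBM (e i) (Gm_dual (es_dual i) psiM y)).
Qed.

Lemma Gamma_end u : Mend rA (Gamma u).
Proof. by apply: (Mend_sum_fun HBM); apply: Forall_all => l; apply: Gamma1_end. Qed.

Lemma Gamma1_additive psi z : Mdual rA psi -> additive_fun (fun y => Gamma1 y psi z).
Proof.
move=> psiM y y'; rewrite /Gamma1 -big_split; apply: eq_bigr => i _ /=.
by rewrite (Gm_additive_y (es_dual i) psiM) (rADr HBM).
Qed.

Lemma Gamma1_lB b y psi z : Mdual rA psi -> Gamma1 (lB b y) psi z = lB b (Gamma1 y psi z).
Proof.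
move=> psiM; rewrite /Gamma1 (lB_sumr HBM).
under eq_bigr do rewrite (Gm_lBy _ _ _ _ psiM) (rA_sumr HBM).
rewrite exchange_big; apply: eq_bigr => k _ /=.
under eq_bigr do rewrite (rAM HBM).
by rewrite -(rA_suml HBM) sum_es (lB_rA HBM).
Qed.

Lemma eq_Gamma u u' : (forall m, u m = u' m) -> Gamma u =1 Gamma u'.
Proof. by move=> uu' x; apply: eq_bigr => l _; rewrite uu'. Qed.

Lemma GammaD u v x : Gamma (fun m => u m + v m) x = Gamma u x + Gamma v x.
Proof.
rewrite /Gamma -big_split; apply: eq_bigr => l _.
exact: Gamma1_additive (es_dual l) _ _.
Qed.

Lemma Gamma0 x : Gamma (fun=> 0) x = 0.
Proof.
rewrite /Gamma big1 // => l _.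
exact: additive_fun0 (Gamma1_additive x (es_dual l)).
Qed.

Lemma Gamma_lB b u x : Gamma (fun m => lB b (u m)) x = lB b (Gamma u x).
Proof.
by rewrite /Gamma (lB_sumr HBM); apply: eq_bigr => l _; apply: Gamma1_lB.
Qed.

Lemma Gamma_lBr b u x : Mend rA u -> Gamma (fun m => u (lB b m)) x = Gamma u (lB b x).
Proof.
move=> uM; rewrite /Gamma /Gamma1.
under [RHS]eq_bigr do under eq_bigr do rewrite Gm_lBz ?es_dual // (rA_sumr HBM).
rewrite exchange_big [RHS]exchange_big; apply: eq_bigr => i _ /=.
rewrite [RHS]exchange_big; apply: eq_bigr => k _ /=.
rewrite -(rA_sumr HBM) -(additive_fun_sum _ _ (Gm_additive_y (es_dual i) (es_dual k) x)).
rewrite (dual_basis_end_sum dbasis (lB b (e k)) uM).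
by congr (rA (e i) (Gm (es i) _ (es k) x)); apply: eq_bigr => l _; rewrite (Mend_rA uM).
Qed.

Lemma Gamma_id x : Gamma (fun m => m) x = x.
Proof.
rewrite /Gamma /Gamma1 exchange_big -[RHS]sum_es; apply: eq_bigr => i _ /=.
by rewrite -(rA_sumr HBM) Gm_counit.
Qed.

Lemma gamma_coassoc_rank1 i y psi z : Mdual rA psi ->
  ceq [seq (es i, rA (e k) (Gm (es k) y psi z)) | k <- enum 'I_n] [:: (Gm (es i) y psi, z)].
Proof.
move=> psiM; have := gamma_coassoc (cwf1 y (es_dual i)) (cwf1 z psiM).
rewrite !sumC_cat /comat_Delta /= !cats0.
rewrite (flatten_map_seq1 (k := fun k => (es i, rA (e k) (Gm (es k) y psi z)))) //.
rewrite (flatten_map_seq1 (k := fun k => (fun m => Gm (es i) y psi (e k) * es k m, z))) //.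
move/teq_trans; apply; apply: teq_sym.
have GmM := Gm_dual (es_dual i) psiM y.
apply: (comat_suml lB z GmM (Forall_all _ (fun k => Mdual_lmul _ (es_dual k)))) => m.
by rewrite /= (dual_basis_dual_sum dbasis m GmM).
Qed.

Local Notation sweq := (swe_eq lB rA).

(* The coassociativity of [gamma] is used here, transported to [S (x)_B S] along [comat_to_swe]. *)
Lemma swe_Gamma1_rank1_mid s y psi z r : Mend rA s -> Mdual rA psi ->
  sweq [:: (s, fun x => rA (Gamma1 y psi z) (es r x))]
       [:: (fun x => s (Gamma1 y psi x), fun x => rA z (es r x))].
Proof.
move=> sM psiM.
pose T k x := rA (rA (e k) (Gm (es k) y psi z)) (es r x).
pose S i x := s (rA (e i) (es i x)).
pose U i x := s (rA (e i) (Gm (es i) y psi x)).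
pose R x := rA z (es r x).
have TM k : Mend rA (T k) := Mend_rank1 HBM _ (es_dual r).
have SM i : Mend rA (S i) := Mend_comp sM (Mend_rank1 HBM _ (es_dual i)).
have UM i : Mend rA (U i) := Mend_comp sM (Mend_rank1 HBM _ (Gm_dual (es_dual i) psiM y)).
have RM : Mend rA R := Mend_rank1 HBM _ (es_dual r).
apply: (teq_trans (t := [seq (s, T k) | k <- enum 'I_n])).
  apply: swe_sumr (Forall_all _ TM) _ => //; first exact (Mend_rank1 HBM _ (es_dual r)).
  by move=> x; rewrite /Gamma1 (rA_suml HBM).
apply: (teq_trans (t := flatten [seq [seq (S i, T k) | i <- enum 'I_n] | k <- enum 'I_n])).
  rewrite -(flatten_map1 (fun k => (s, T k))); apply: teq_flatten; apply: Forall_all => k.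
  apply: swe_suml (Forall_all _ SM) _ => // x.
  by rewrite -(Mend_sum sM) sum_es.
apply: teq_trans (teq_flatten_exchange (fun k i => (S i, T k)) _ _) _.
apply: (teq_trans (t := [seq (U i, R) | i <- enum 'I_n])).
  rewrite -(flatten_map1 (fun i => (U i, R))); apply: teq_flatten; apply: Forall_all => i.
  have gD : additive_fun (fun a => s (rA (e i) a)) by move=> a a'; rewrite (rADr HBM) (MendD sM).
  have gM a a' : s (rA (e i) (a * a')) = rA (s (rA (e i) a)) a'.
    by rewrite (rAM HBM) (Mend_rA sM).
  have := comat_to_swe HBM gD gM (es_dual r) (gamma_coassoc_rank1 i y z psiM).
  by rewrite -map_comp.
apply: teq_sym; apply: swe_suml (Forall_all _ UM) _ => //.
  exact: Mend_comp sM (Gamma1_end y psiM).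
by move=> x; rewrite /Gamma1 (Mend_sum sM).
Qed.

Lemma swe_Gamma1_mid s t y psi : Mend rA s -> Mend rA t -> Mdual rA psi ->
  sweq [:: (s, fun x => Gamma1 y psi (t x))] [:: (fun x => s (Gamma1 y psi x), t)].
Proof.
move=> sM tM psiM; have GM := Gamma1_end y psiM.
have TM r : Mend rA (fun x => rA (t (e r)) (es r x)) := Mend_rank1 HBM _ (es_dual r).
have GTM r : Mend rA (fun x => rA (Gamma1 y psi (t (e r))) (es r x)) := Mend_rank1 HBM _ (es_dual r).
apply: (teq_trans (t := [seq (s, fun x => rA (Gamma1 y psi (t (e r))) (es r x)) | r <- enum 'I_n])).
  apply: swe_sumr (Forall_all _ GTM) _ => //; first exact: Mend_comp GM tM.
  move=> x; rewrite (dual_basis_end_sum dbasis x tM) (Mend_sum GM).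
  by apply: eq_bigr => r _; rewrite (Mend_rA GM).
apply: (teq_trans (t := [seq (fun x => s (Gamma1 y psi x), fun x => rA (t (e r)) (es r x)) | r <- enum 'I_n])).
  by apply: teq_map; apply: Forall_all => r; apply: swe_Gamma1_rank1_mid.
apply: teq_sym; apply: swe_sumr (Forall_all _ TM) _ => //; first exact: Mend_comp sM GM.
by move=> x; apply: (dual_basis_end_sum dbasis x tM).
Qed.

Lemma swe_Gamma_mid s t u : Mend rA s -> Mend rA t ->
  sweq [:: (s, fun x => Gamma u (t x))] [:: (fun x => s (Gamma u x), t)].
Proof.
move=> sM tM; have G1M l := Gamma1_end (u (e l)) (es_dual l).
apply: (teq_trans (t := [seq (s, fun x => Gamma1 (u (e l)) (es l) (t x)) | l <- enum 'I_n])).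
  apply: swe_sumr (Forall_all _ (fun l => Mend_comp (G1M l) tM)) _ => //.
  exact: Mend_comp (Gamma_end u) tM.
apply: (teq_trans (t := [seq (fun x => s (Gamma1 (u (e l)) (es l) x), t) | l <- enum 'I_n])).
  by apply: teq_map; apply: Forall_all => l; apply: swe_Gamma1_mid.
apply: teq_sym; apply: swe_suml (Forall_all _ (fun l => Mend_comp sM (G1M l))) _ => //.
  exact: Mend_comp sM (Gamma_end u).
by move=> x; rewrite /Gamma (Mend_sum sM).
Qed.

Definition swe_gamma (d d' : swe M) : M -> M :=
  fun x => \sum_(p <- d) \sum_(q <- d') p.1 (Gamma (fun m => p.2 (q.1 m)) (q.2 x)).
Definition swe_cointegral (w : seq (swe M * swe M)) : M -> M :=
  fun x => \sum_(pr <- w) swe_gamma pr.1 pr.2 x.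

Lemma swe_wf_end d : swe_wf rA d ->
  List.Forall (fun p : (M -> M) * (M -> M) => Mend rA p.1 /\ Mend rA p.2) d.
Proof. exact: (proj1 (allP_Forall _ _ _)). Qed.

Lemma swe_gamma_eql d1 d2 d' x : sweq d1 d2 -> swe_gamma d1 d' x = swe_gamma d2 d' x.
Proof.
apply: (eq_big_teq (f := fun s s' => \sum_(q <- d') s (Gamma (fun m => s' (q.1 m)) (q.2 x)))).
- move=> s1 s2 t1 t2 _ _ _ _ s12 t12; apply: eq_bigr => q _.
  by rewrite s12 (eq_Gamma (u' := fun m => t2 (q.1 m))).
- by move=> s1 s2 t _ _ _; rewrite -big_split.
- move=> s t1 t2 sM _ _; rewrite -big_split; apply: eq_bigr => q _ /=.
  by rewrite -(MendD sM) -GammaD.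
- by move=> t _; rewrite big1.
- move=> s sM; rewrite big1 // => q _.
  by rewrite (eq_Gamma (u' := fun=> 0)) // Gamma0 (Mend0 sM).
- by move=> s b t _ _; apply: eq_bigr => q _ /=; rewrite Gamma_lB.
Qed.

Lemma swe_gamma_eqr d d1' d2' x : swe_wf rA d -> sweq d1' d2' ->
  swe_gamma d d1' x = swe_gamma d d2' x.
Proof.
move=> /swe_wf_end dM; rewrite /swe_gamma (exchange_big _ d d1') (exchange_big _ d d2').
apply: (eq_big_teq (f := fun t t' => \sum_(p <- d) p.1 (Gamma (fun m => p.2 (t m)) (t' x)))).
- move=> s1 s2 t1 t2 _ _ _ _ s12 ->; apply: eq_bigr => p _.
  by rewrite (eq_Gamma (u' := fun m => p.2 (s2 m))) // => m; rewrite s12.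
- move=> s1 s2 t _ _ _; rewrite -big_split; apply: (eq_big_Forall dM) => p [p1M p2M] /=.
  rewrite (eq_Gamma (u' := fun m => p.2 (s1 m) + p.2 (s2 m))); last by move=> m; rewrite /Sadd (MendD p2M).
  by rewrite GammaD (MendD p1M).
- move=> s t1 t2 _ _ _; rewrite -big_split; apply: (eq_big_Forall dM) => p [p1M _] /=.
  by rewrite /Sadd (MendD (Gamma_end _)) (MendD p1M).
- move=> t _; rewrite (eq_big_Forall dM (G := fun=> 0)) ?big1_eq // => p [p1M p2M].
  rewrite (eq_Gamma (u' := fun=> 0)); last by move=> m; rewrite /Szero (Mend0 p2M).
  by rewrite Gamma0 (Mend0 p1M).
- move=> s _; rewrite (eq_big_Forall dM (G := fun=> 0)) ?big1_eq // => p [p1M _].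
  by rewrite /Szero (Mend0 (Gamma_end _)) (Mend0 p1M).
- move=> s b t sM _; apply: (eq_big_Forall dM) => p [_ p2M] /=.
  by rewrite (Gamma_lBr b (t x) (Mend_comp p2M sM)).
Qed.

Local Notation swe_cceq := (CCeq (swe_eq lB rA) cat [::] (@swe_lact M) (@swe_ract M) (swe_wf rA)).

Lemma swe_cointegral_eq u v x : swe_cceq u v -> swe_cointegral u x = swe_cointegral v x.
Proof.
apply: (eq_big_teq (f := fun d d' => swe_gamma d d' x)).
- move=> d1 d2 d1' d2' _ d2W _ _ d12 d12'.
  by rewrite (swe_gamma_eql _ _ d12) (swe_gamma_eqr _ d2W d12').
- by move=> d1 d2 d' _ _ _; rewrite /swe_gamma big_cat.
- move=> d d1' d2' _ _ _; rewrite /swe_gamma -big_split.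
  by apply: eq_bigr => p _; rewrite big_cat.
- by move=> d' _; rewrite /swe_gamma big_nil.
- by move=> d _; rewrite /swe_gamma big1 // => p _; rewrite big_nil.
- move=> d s d' _ _; rewrite /swe_gamma big_map; apply: eq_bigr => p _.
  by rewrite big_map.
Qed.

Lemma swe_gamma_end d d' : swe_wf rA d -> swe_wf rA d' -> Mend rA (swe_gamma d d').
Proof.
move=> /swe_wf_end dM /swe_wf_end d'M.
apply: (Mend_sum_fun HBM); apply: List.Forall_impl dM => p [p1M p2M].
apply: (Mend_sum_fun HBM); apply: List.Forall_impl d'M => q [q1M q2M].
exact: Mend_comp p1M (Mend_comp (Gamma_end _) q2M).
Qed.

Lemma swe_cointegral_end w : CCwf (swe_wf rA) w -> Mend rA (swe_cointegral w).
Proof.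
move=> /allP_Forall wM; apply: (Mend_sum_fun HBM).
by apply: List.Forall_impl wM => pr [dW d'W]; apply: swe_gamma_end.
Qed.

Definition swe_term (p q : (M -> M) * (M -> M)) : (M -> M) * (M -> M) :=
  (fun x => p.1 (Gamma (fun m => p.2 (q.1 m)) x), q.2).
Definition swe_double (d d' : swe M) : swe M :=
  flatten [seq [seq swe_term p q | q <- d'] | p <- d].

Lemma swe_coassoc_l d d' : swe_wf rA d -> swe_wf rA d' ->
  sweq (sumC cat [::] [seq swe_ract p.1 (swe_cointegral [:: (p.2, d')]) | p <- swe_Delta d])
       (swe_double d d').
Proof.
move=> dW d'W; have d'M := swe_wf_end d'W.
rewrite sumC_cat /swe_Delta -map_comp; apply: teq_flatten.
apply: List.Forall_impl (swe_wf_end dW) => p [p1M p2M] /=.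
have gM : Mend rA (swe_cointegral [:: ([:: (fun m => m, p.2)], d')]).
  by apply: swe_cointegral_end; split=> //; split=> //; apply: Mend_id.
apply: (teq_trans (t := [seq (p.1, fun x => Gamma (fun m => p.2 (q.1 m)) (q.2 x)) | q <- d'])).
  apply: swe_sumr => //.
    by apply: List.Forall_impl d'M => q [_ q2M]; apply: Mend_comp (Gamma_end _) q2M.
  by move=> x; rewrite /Smul /swe_cointegral big_seq1 /swe_gamma big_seq1.
apply: teq_map; apply: List.Forall_impl d'M => q [_ q2M].
exact: swe_Gamma_mid p1M q2M.
Qed.

Lemma swe_coassoc_r d d' : swe_wf rA d -> swe_wf rA d' ->
  sweq (sumC cat [::] [seq swe_lact (swe_cointegral [:: (d, p.1)]) p.2 | p <- swe_Delta d'])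
       (swe_double d d').
Proof.
move=> dW d'W; have dM := swe_wf_end dW.
apply: teq_trans (teq_sym (teq_flatten_exchange swe_term d d')).
rewrite sumC_cat /swe_Delta -map_comp; apply: teq_flatten.
apply: List.Forall_impl (swe_wf_end d'W) => q [q1M q2M] /=.
have gM : Mend rA (swe_cointegral [:: (d, [:: (q.1, fun m => m)])]).
  by apply: swe_cointegral_end; split=> //; split=> //; apply: Mend_id.
apply: (swe_suml HBM (F := fun p x => p.1 (Gamma (fun m => p.2 (q.1 m)) x)) (Mend_comp gM (Mend_id rA)) q2M).
  by apply: List.Forall_impl dM => p [p1M _]; apply: Mend_comp p1M (Gamma_end _).
by move=> x; rewrite /Smul /swe_cointegral big_seq1 /swe_gamma; apply: eq_bigr => p _; rewrite big_seq1.
Qed.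

Lemma sweedler_coseparable_of_cointegral : sweedler_coseparable lB rA.
Proof.
exists swe_cointegral; split; first by move=> w /swe_cointegral_end.
split; first by move=> u v _ _ uv x; apply: swe_cointegral_eq.
split; first by move=> u v _ _ x; rewrite /swe_cointegral big_cat.
split.
  move=> s d d' sM _ _ x; rewrite /Smul /swe_cointegral !big_seq1 /swe_gamma big_map (Mend_sum sM).
  by apply: eq_bigr => p _; rewrite (Mend_sum sM).
split.
  move=> s d d' _ _ _ x; rewrite /Smul /swe_cointegral !big_seq1 /swe_gamma.
  by apply: eq_bigr => p _; rewrite big_map.
split; first by move=> d d' dW d'W; apply: teq_trans (swe_coassoc_l dW d'W) (teq_sym (swe_coassoc_r dW d'W)).
move=> d _ x; rewrite /swe_cointegral big_map /swe_eps (foldr_add_fun (fun p => Smul p.1 p.2)).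
by apply: eq_bigr => p _; rewrite /swe_gamma !big_seq1 /= Gamma_id.
Qed.
End ComatrixSweedler.

Theorem theorem3p5 (A B : pzRingType) (M : zmodType)
  (lB : B -> M -> M) (rA : M -> A -> M)
  (n : nat) (e : 'I_n -> M) (es : 'I_n -> M -> A) :
  is_bimodule lB rA ->
  is_dual_basis rA e es ->
  (separable_bimodule lB rA -> comatrix_coseparable lB rA e es) /\
  (comatrix_coseparable lB rA e es -> sweedler_coseparable lB rA).
Proof.
move=> HBM dbasis; split.
  case/separable_central_element=> sep [sep_wf sep_central sep_ev].
  exact (comatrix_coseparable_of_central HBM dbasis sep_wf sep_central sep_ev).
by case=> gamma gammaP; exact (sweedler_coseparable_of_cointegral HBM dbasis gammaP).
Qed.
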